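(* Under the Setting below, let $\{x^k\}_{k\ge0}$ be generated by Algorithm 1 with extrapolation weights satisfying $0\le\omega_k\le\omega<1$. Then: (1) $\{x^k\}$ is bounded; (2) every cluster point of $\{x^k\}$ is a local minimizer of $H$; (3) $H(x^k)\to H(x^* )$, where $x^*$ is any cluster point of $\{x^k\}$; (4) if moreover $\omega_k\equiv\omega\in(0,1)$ for all $k$, then the whole sequence $\{x^k\}$ converges (to a local minimizer of $H$).
   Context: Setting. Let $\lambda>0$, $l,u\in\mathbb{R}^n$ with $l\le u$ componentwise, $X=\{x\in\mathbb{R}^n: l\le x\le u\}$, and $\delta_X$ the indicator function of $X$ ($0$ on $X$, $+\infty$ outside). For $x\in\mathbb{R}^n$, $\|x\|_0$ is the number of nonzero components of $x$ and $I(x)=\{i: x_i=0\}$. Let $f:\mathbb{R}^n\to\mathbb{R}$ be convex and differentiable, bounded from below on $X$, with $\nabla f$ $L$-Lipschitz continuous on $X$ ($L>0$). Define $H(x)=\lambda\|x\|_0+f(x)+\delta_X(x)$. Algorithm 1. Choose $\mu>0$, extrapolation weights $0\le\omega_k\le\omega<1$, and a starting point $x^0\in X$; set $x^{-1}=x^0$. For $k=0,1,2,\dots$: define $y^{k+1}\in\mathbb{R}^n$ by $y^{k+1}_i=x^k_i+\omega_k(x^k_i-x^{k-1}_i)$ for $i\notin I(x^k)$ and $y^{k+1}_i=x^k_i\,(=0)$ for $i\in I(x^k)$ (extrapolation only on the support of $x^k$); if $\langle y^{k+1}-x^k,\nabla f(y^{k+1})\rangle>0$ or $y^{k+1}\notin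 X$, reset $y^{k+1}:=x^k$; then take any $$x^{k+1}\in\arg\min_{x\in X}\ \lambda\|x\|_0+\frac{L}{2}\Big\|x-y^{k+1}+\frac1L\nabla f(y^{k+1})\Big\|^2+\frac{\mu}{2}\|x-y^{k+1}\|^2 .$$ A local minimizer of $H$ is a point $x^*\in X$ such that $H(x)\ge H(x^* )$ for all $x$ in some neighborhood of $x^*$. *)

From mathcomp Require Import ssreflect ssrfun ssrbool eqtype ssrnat seq fintype.
From Stdlib Require Import Reals Lra.
Open Scope R_scope.

Definition vec (n : nat) := 'I_n -> R.

Definition sumI {n : nat} (F : 'I_n -> R) : R :=
  List.fold_right Rplus 0 (List.map F (enum 'I_n)).

Definition vadd {n} (x y : vec n) : vec n := fun i => x i + y i.
Definition vsub {n} (x y : vec n) : vec n := fun i => x i - y i.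
Definition vscal {n} (a : R) (x : vec n) : vec n := fun i => a * x i.
Definition inner {n} (x y : vec n) : R := sumI (fun i => x i * y i).
Definition sqnorm {n} (x : vec n) : R := inner x x.
Definition norm {n} (x : vec n) : R := sqrt (sqnorm x).

Definition l0 {n} (x : vec n) : R :=
  sumI (fun i => if Req_EM_T (x i) 0 then 0 else 1).

Definition inX {n} (l u x : vec n) : Prop := forall i, l i <= x i <= u i.

Definition convex {n} (f : vec n -> R) : Prop :=
  forall x y t, 0 <= t <= 1 ->
    f (vadd (vscal t x) (vscal (1 - t) y)) <= t * f x + (1 - t) * f y.

Definition is_gradient {n} (f : vec n -> R) (g : vec n -> vec n) : Prop :=
  forall x eps, 0 < eps -> exists delta, 0 < delta /\
    forall y, norm (vsub y x) < delta ->
      Rabs (f y - f x - inner (g x) (vsub y x)) <= eps * norm (vsub y x).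

(** H restricted to X (where H = lambda ||x||_0 + f(x) + delta_X(x) is finite) *)
Definition Hfin {n} (lam : R) (f : vec n -> R) (x : vec n) : R := lam * l0 x + f x.

(** local minimizer of H = lambda||.||_0 + f + delta_X : since H = +oo off X,
    the defining inequality only needs checking on X. *)
Definition local_min {n} (lam : R) (f : vec n -> R) (l u xs : vec n) : Prop :=
  inX l u xs /\ exists delta, 0 < delta /\
    forall x, inX l u x -> norm (vsub x xs) < delta ->
      Hfin lam f xs <= Hfin lam f x.

Definition bounded_seq {n} (x : nat -> vec n) : Prop :=
  exists M, forall k, norm (x k) <= M.

Definition cluster_point {n} (x : nat -> vec n) (xs : vec n) : Prop :=
  forall eps, 0 < eps -> forall N : nat, exists k : nat, (N <= k)%nat /\ norm (vsub (x k) xs) < eps.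

Definition converges_to {n} (x : nat -> vec n) (xs : vec n) : Prop :=
  forall eps, 0 < eps -> exists N : nat, forall k : nat, (N <= k)%nat -> norm (vsub (x k) xs) < eps.

(** x^{k-1} with the convention x^{-1} = x^0 *)
Definition xprev {n} (x : nat -> vec n) (k : nat) : vec n :=
  match k with O => x O | S k' => x k' end.

Definition yhat {n} (x : nat -> vec n) (om : nat -> R) (k : nat) : vec n :=
  fun i => if Req_EM_T (x k i) 0 then x k i
           else x k i + om k * (x k i - xprev x k i).

Definition subobj {n} (lam L mu : R) (g : vec n -> vec n) (y z : vec n) : R :=
  lam * l0 z + L / 2 * sqnorm (vadd (vsub z y) (vscal (1 / L) (g y)))
  + mu / 2 * sqnorm (vsub z y).

(** (x, y) is a run of Algorithm 1; y k denotes y^k (y 0 unused). *)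
Definition algorithm1 {n} (lam L mu : R) (l u : vec n) (g : vec n -> vec n)
    (om : nat -> R) (x y : nat -> vec n) : Prop :=
  inX l u (x O) /\
  forall k : nat,
    (let yh := yhat x om k in
     ((inner (vsub yh (x k)) (g yh) > 0 \/ ~ inX l u yh) -> y (S k) = x k) /\
     (~ (inner (vsub yh (x k)) (g yh) > 0 \/ ~ inX l u yh) -> y (S k) = yh)) /\
    inX l u (x (S k)) /\
    (forall z, inX l u z -> subobj lam L mu g (y (S k)) (x (S k)) <= subobj lam L mu g (y (S k)) z).

(* The value H (x^k) is nonincreasing: the safeguard keeps the extrapolated point y^(k+1) no
   worse than x^k, and by the descent lemma x^(k+1) improves on y^(k+1) by
   mu/2 |x^(k+1) - y^(k+1)|^2.  Setting one entry to 0 is always admissible in the subproblem, so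
   the nonzero entries of the iterates are bounded away from 0 uniformly; hence iterates close to
   a cluster point x* have the support of x*, and letting k tend to infinity in the key inequality
   of the subproblem shows that x* minimizes f on that face of the box, which makes it a local
   minimizer of H.  Once the support is stable, the extrapolation is a heavy-ball step on every
   coordinate, |x^k - x*|^2 satisfies an inertial Fejer inequality with summable errors, and the
   whole sequence converges. *)

From mathcomp Require Import ssreflect ssrfun ssrbool eqtype ssrnat seq fintype.
From mathcomp Require Import zify.
From Stdlib Require Import Reals Lra Lia.
From Stdlib Require Import FunctionalExtensionality Classical IndefiniteDescription.
Open Scope R_scope.

Lemma Rabs_le_inv a b : Rabs a <= b -> - b <= a <= b.
Proof. move=> H; split; [have := Rle_abs (- a); rewrite Rabs_Ropp | have := Rle_abs a]; lra. Qed.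

Lemma mul_div_succ_le c e : 0 <= c -> 0 <= e -> c * (e / (c + 1)) <= e.
Proof.
move=> Hc He; have -> : c * (e / (c + 1)) = e - e / (c + 1) by field; lra.
have : 0 <= e / (c + 1) by apply: Rmult_le_pos; [|apply: Rlt_le; apply: Rinv_0_lt_compat]; lra.
lra.
Qed.

Definition sumL {T : Type} (s : list T) (F : T -> R) : R :=
  List.fold_right Rplus 0 (List.map F s).

Section ListSums.
Context {T : eqType}.
Implicit Types (s : seq T) (F G : T -> R).

Lemma sumL_cons a s F : sumL (a :: s) F = F a + sumL s F.
Proof. by []. Qed.

Lemma sumL_ext s F G : (forall i, F i = G i) -> sumL s F = sumL s G.
Proof. by move=> H; elim: s => [|a s IH] //; rewrite !sumL_cons IH H. Qed.

Lemma sumL_add s F G : sumL s (fun i => F i + G i) = sumL s F + sumL s G.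
Proof. elim: s => [|a s IH]; rewrite ?sumL_cons /=; [rewrite /sumL /=; lra | rewrite IH; lra]. Qed.

Lemma sumL_scal s c F : sumL s (fun i => c * F i) = c * sumL s F.
Proof. elim: s => [|a s IH]; rewrite ?sumL_cons /=; [rewrite /sumL /=; lra | rewrite IH; lra]. Qed.

Lemma sumL_le s F G : (forall i, F i <= G i) -> sumL s F <= sumL s G.
Proof.
move=> H; elim: s => [|a s IH]; rewrite ?sumL_cons; [rewrite /sumL /=; lra | have := H a; lra].
Qed.

Lemma sumL_const s c : sumL s (fun _ => c) = INR (size s) * c.
Proof.
elim: s => [|a s IH]; first by rewrite /sumL /=; lra.
by rewrite sumL_cons IH; change (size (a :: s)) with (size s).+1; rewrite S_INR; lra.
Qed.

Lemma sumL_le_add1 s F G i : (forall j, F j <= G j) -> i \in s -> F i + 1 <= G i ->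
  sumL s F + 1 <= sumL s G.
Proof.
move=> H; elim: s => [|a s IH] //; rewrite in_cons !sumL_cons.
case/orP => [/eqP <- Ha | Hi Hl]; first by have := sumL_le s F G H; lra.
by have := IH Hi Hl; have := H a; lra.
Qed.

Lemma sumL_ge_term s F i : (forall j, 0 <= F j) -> i \in s -> F i <= sumL s F.
Proof.
move=> H; elim: s => [|a s IH] //; rewrite in_cons sumL_cons.
have := sumL_le s (fun _ => 0) F H; rewrite sumL_const Rmult_0_r => Hs.
by case/orP => [/eqP -> | /IH]; have := H a; lra.
Qed.

Lemma sumL_single s F i : (forall j, j != i -> F j = 0) -> uniq s ->
  sumL s F = if i \in s then F i else 0.
Proof.
move=> H; elim: s => [|a s IH] //= /andP [Ha Hu]; rewrite sumL_cons IH // in_cons.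
case: (eqVneq a i) => [<-|Hai] /=; first by rewrite (negbTE Ha); lra.
by rewrite H //; lra.
Qed.

End ListSums.

Section IndexSums.
Context {n : nat}.
Implicit Types (F G : 'I_n -> R).

Lemma sumI_ext F G : (forall i, F i = G i) -> sumI F = sumI G.
Proof. exact: sumL_ext. Qed.
Lemma sumI_add F G : sumI (fun i => F i + G i) = sumI F + sumI G.
Proof. exact: sumL_add. Qed.
Lemma sumI_scal c F : sumI (fun i => c * F i) = c * sumI F.
Proof. exact: sumL_scal. Qed.
Lemma sumI_le F G : (forall i, F i <= G i) -> sumI F <= sumI G.
Proof. exact: sumL_le. Qed.
Lemma sumI_const c : sumI (fun _ : 'I_n => c) = INR n * c.
Proof. by rewrite /sumI -/(sumL _ _) sumL_const size_enum_ord. Qed.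
Lemma sumI_ge_term F i : (forall j, 0 <= F j) -> F i <= sumI F.
Proof. by move=> H; apply: sumL_ge_term; rewrite ?mem_enum. Qed.
Lemma sumI_single F i : (forall j, j != i -> F j = 0) -> sumI F = F i.
Proof. by move=> H; rewrite /sumI -/(sumL _ _) (sumL_single _ _ i) ?enum_uniq ?mem_enum. Qed.
Lemma sumI_le_add1 F G i : (forall j, F j <= G j) -> F i + 1 <= G i -> sumI F + 1 <= sumI G.
Proof. by move=> H; apply: sumL_le_add1; rewrite ?mem_enum. Qed.

Lemma sumI_nonneg F : (forall i, 0 <= F i) -> 0 <= sumI F.
Proof. by move=> H; have := sumI_le (fun _ => 0) F H; rewrite sumI_const; lra. Qed.
Lemma sumI_opp F : sumI (fun i => - F i) = - sumI F.
Proof. rewrite -(sumI_ext (fun i => -1 * F i)) ?sumI_scal => *; lra. Qed.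
Lemma sumI_sub F G : sumI (fun i => F i - G i) = sumI F - sumI G.
Proof. by rewrite /Rminus -sumI_opp -sumI_add. Qed.
Lemma sumI_div F c : sumI (fun i => F i / c) = sumI F / c.
Proof. by rewrite /Rdiv Rmult_comm -sumI_scal; apply: sumI_ext => i; ring. Qed.

Lemma finite_pos_lb F : (forall i, 0 < F i) -> exists m, 0 < m /\ forall i, m <= F i.
Proof.
move=> H.
suff [m [Hm Hs]] : exists m, 0 < m /\ forall i, i \in enum 'I_n -> m <= F i.
  by exists m; split => // i; apply: Hs; rewrite mem_enum.
elim: (enum 'I_n) => [|a s [m [Hm Hs]]]; first by exists 1; split => //; lra.
exists (Rmin m (F a)); split; first exact: Rmin_pos.
move=> i; rewrite in_cons => /orP [/eqP ->|Hi]; first exact: Rmin_r.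
exact: Rle_trans (Rmin_l _ _) (Hs _ Hi).
Qed.

Lemma finite_eventually (P : 'I_n -> nat -> Prop) :
  (forall i, exists K, forall k, (K <= k)%nat -> P i k) ->
  exists K, forall k, (K <= k)%nat -> forall i, P i k.
Proof.
move=> H.
suff [K HK] : exists K, forall k, (K <= k)%nat -> forall i, i \in enum 'I_n -> P i k.
  by exists K => k Hk i; apply: HK; rewrite ?mem_enum.
elim: (enum 'I_n) => [|a s [K HK]]; first by exists O.
case: (H a) => Ka HKa; exists (maxn K Ka) => k Hk i; rewrite in_cons => /orP [/eqP ->|Hi].
- by apply: HKa; lia.
- by apply: HK => //; lia.
Qed.

End IndexSums.

Lemma discriminant_le A B C : 0 <= C -> (forall t, 0 <= A - 2 * t * B + t * t * C) ->
  B * B <= A * C.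
Proof.
move=> HC H; case: (Rle_lt_or_eq_dec 0 C HC) => [Cp|C0].
- have := H (B / C).
  have -> : A - 2 * (B / C) * B + B / C * (B / C) * C = A - B * B / C by field; lra.
  move=> h; have -> : B * B = B * B / C * C by field; lra.
  by apply: Rmult_le_compat_r; lra.
- subst C; rewrite Rmult_0_r; case: (Req_dec B 0) => [->|Bn]; first lra.
  have := H ((A + 1) / (2 * B)).
  have -> : A - 2 * ((A + 1) / (2 * B)) * B + (A + 1) / (2 * B) * ((A + 1) / (2 * B)) * 0 = -1
    by field.
  lra.
Qed.

Section Euclid.
Context {n : nat}.
Implicit Types (a b : vec n).

Lemma vec_ext a b : (forall i, a i = b i) -> a = b.
Proof. exact: functional_extensionality. Qed.

Lemma sqnorm_nonneg a : 0 <= sqnorm a.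
Proof. by apply: sumI_nonneg => i; nra. Qed.

Lemma norm_nonneg a : 0 <= norm a.
Proof. exact: sqrt_pos. Qed.

Lemma norm_sq a : norm a * norm a = sqnorm a.
Proof. by rewrite /norm sqrt_sqrt //; exact: sqnorm_nonneg. Qed.

Lemma sqnorm_vsub_sym a b : sqnorm (vsub a b) = sqnorm (vsub b a).
Proof. by apply: sumI_ext => i; rewrite /vsub; ring. Qed.

Lemma inner_vscal_r c a b : inner a (vscal c b) = c * inner a b.
Proof. by rewrite /inner -sumI_scal; apply: sumI_ext => i; rewrite /vscal; ring. Qed.

Lemma Cauchy_Schwarz a b : Rabs (inner a b) <= norm a * norm b.
Proof.
have H : inner a b * inner a b <= sqnorm a * sqnorm b.
  apply: discriminant_le; first exact: sqnorm_nonneg.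
  move=> t; have := sqnorm_nonneg (fun i => a i - t * b i).
  have -> : sqnorm (fun i => a i - t * b i) = sqnorm a - 2 * t * inner a b + t * t * sqnorm b.
    by rewrite /sqnorm /inner -!sumI_scal -sumI_sub -sumI_add; apply: sumI_ext => i; ring.
  done.
rewrite -(sqrt_Rsqr_abs (inner a b)) /norm -sqrt_mult; try exact: sqnorm_nonneg.
by apply: sqrt_le_1_alt; rewrite /Rsqr; lra.
Qed.

Lemma inner_le_norm a b : inner a b <= norm a * norm b.
Proof. by have := Cauchy_Schwarz a b; have := Rle_abs (inner a b); lra. Qed.

Lemma coord_le_norm a i : Rabs (a i) <= norm a.
Proof.
rewrite -sqrt_Rsqr_abs /norm; apply: sqrt_le_1_alt; rewrite /Rsqr.
by apply: (sumI_ge_term (fun i => a i * a i)) => j; nra.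
Qed.

Lemma coord_dist_le a b i : Rabs (a i - b i) <= norm (vsub a b).
Proof. exact: (coord_le_norm (vsub a b) i). Qed.

Lemma norm_scal c a : norm (vscal c a) = Rabs c * norm a.
Proof.
rewrite /norm; have -> : sqnorm (vscal c a) = (c * c) * sqnorm a.
  by rewrite /sqnorm /inner -sumI_scal; apply: sumI_ext => i; rewrite /vscal; ring.
rewrite sqrt_mult; [| nra | exact: sqnorm_nonneg].
by rewrite -/(Rsqr c) sqrt_Rsqr_abs.
Qed.

Lemma sqnorm_le_coord_bound a c : (forall i, Rabs (a i) <= c) -> sqnorm a <= INR n * (c * c).
Proof.
move=> H; rewrite -sumI_const; apply: sumI_le => i.
have := H i; have := Rabs_pos (a i); have := Rabs_mult (a i) (a i).
have := Rle_abs (a i * a i); nra.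
Qed.

Lemma norm_le_coord_bound a c : 0 <= c -> (forall i, Rabs (a i) <= c) ->
  norm a <= sqrt (INR n) * c.
Proof.
move=> Hc /sqnorm_le_coord_bound Ha.
rewrite /norm -(sqrt_Rsqr c) // -sqrt_mult; [| exact: pos_INR | rewrite /Rsqr; nra].
exact: sqrt_le_1_alt.
Qed.

Lemma norm_lt_of_sqnorm a e : 0 < e -> sqnorm a < e * e -> norm a < e.
Proof.
move=> He H; rewrite /norm -(sqrt_Rsqr e); last lra.
by apply: sqrt_lt_1_alt; split; [exact: sqnorm_nonneg | rewrite /Rsqr].
Qed.

Lemma sqnorm_vsub_le a b c : sqnorm (vsub a c) <= 2 * sqnorm (vsub a b) + 2 * sqnorm (vsub b c).
Proof.
rewrite /sqnorm /inner -!sumI_scal -sumI_add; apply: sumI_le => i; rewrite /vsub.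
by have := Rle_0_sqr (a i - 2 * b i + c i); rewrite /Rsqr; nra.
Qed.

Lemma sqnorm_lt_of_norm a e : norm a < e -> sqnorm a < e * e.
Proof. by move=> H; rewrite -norm_sq; have := norm_nonneg a; nra. Qed.

End Euclid.

Lemma inX_segment {n} (l u w z : vec n) t : inX l u w -> inX l u z -> 0 <= t <= 1 ->
  inX l u (vadd w (vscal t (vsub z w))).
Proof. by move=> Hw Hz Ht i; rewrite /vadd /vscal /vsub; have := Hw i; have := Hz i; nra. Qed.

Section Gradient.
Context {n : nat}.
Variables (f : vec n -> R) (g : vec n -> vec n).
Hypothesis Hg : is_gradient f g.

Lemma gradient_local_lipschitz p : exists r C, 0 < r /\ 0 <= C /\
  forall z, norm (vsub z p) < r -> Rabs (f z - f p) <= C * norm (vsub z p).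
Proof.
have [r [Hr Hrr]] := Hg p 1 Rlt_0_1.
exists r, (norm (g p) + 1); split => //; split; first by have := norm_nonneg (g p); lra.
move=> z /Hrr /Rabs_le_inv Hz; have /Rabs_le_inv := Cauchy_Schwarz (g p) (vsub z p).
by have := norm_nonneg (g p); have := norm_nonneg (vsub z p) => *; apply: Rabs_le; nra.
Qed.

Lemma derivable_along_line w v t :
  derivable_pt_lim (fun s => f (vadd w (vscal s v))) t (inner (g (vadd w (vscal t v))) v).
Proof.
move=> eps Heps; set p := vadd w (vscal t v).
have Hn := norm_nonneg v.
have [d [Hd Hdel]] := Hg p (eps / (2 * (norm v + 1))) ltac:(apply: Rdiv_lt_0_compat; lra).
have Hd' : 0 < d / (norm v + 1) by apply: Rdiv_lt_0_compat; lra.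
exists (mkposreal _ Hd') => h Hh0 /= Hh.
have Hq : vsub (vadd w (vscal (t + h) v)) p = vscal h v.
  by apply: vec_ext => i; rewrite /p /vsub /vadd /vscal; ring.
have Hah : 0 < Rabs h by apply: Rabs_pos_lt.
have Hlt : Rabs h * norm v < d.
  have := Rmult_lt_compat_r (norm v + 1) _ _ ltac:(lra) Hh.
  have -> : d / (norm v + 1) * (norm v + 1) = d by field; lra.
  nra.
have := Hdel (vadd w (vscal (t + h) v)); rewrite Hq norm_scal inner_vscal_r => /(_ Hlt) Habs.
have -> : (f (vadd w (vscal (t + h) v)) - f p) / h - inner (g p) v =
   (f (vadd w (vscal (t + h) v)) - f p - h * inner (g p) v) / h by field.
rewrite /Rdiv Rabs_mult Rabs_inv; apply: (Rmult_lt_reg_r (Rabs h)) => //.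
rewrite Rmult_assoc Rinv_l ?Rmult_1_r; last lra.
apply: Rle_lt_trans Habs _.
have -> : eps / (2 * (norm v + 1)) * (Rabs h * norm v) =
  eps * Rabs h * (norm v / (2 * (norm v + 1))) by field; lra.
have : norm v / (2 * (norm v + 1)) < 1.
  by apply: (Rmult_lt_reg_r (2 * (norm v + 1))); [lra | field_simplify; lra].
have : 0 <= norm v / (2 * (norm v + 1)).
  by apply: Rmult_le_pos; [lra | apply: Rlt_le; apply: Rinv_0_lt_compat; lra].
have : 0 < eps * Rabs h by nra.
by move=> *; nra.
Qed.

(* Mean value theorem for [t |-> f (w + t v) - t <g w, v> - L/2 |v|^2 t^2], whose derivative is
   nonpositive on [0, 1] by Lipschitz continuity of the gradient. *)
Lemma descent_lemma L (l u : vec n) :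
  (forall z w, inX l u z -> inX l u w -> norm (vsub (g z) (g w)) <= L * norm (vsub z w)) ->
  forall w z, inX l u w -> inX l u z ->
  f z <= f w + inner (g w) (vsub z w) + L / 2 * sqnorm (vsub z w).
Proof.
move=> HLip w z Hw Hz; set v := vsub z w.
set psi := fun t => f (vadd w (vscal t v)) - (t * inner (g w) v + L / 2 * sqnorm v * (t * t)).
set dpsi := fun t => inner (g (vadd w (vscal t v))) v -
  (inner (g w) v + L / 2 * sqnorm v * (1 * t + t * 1)).
have Hd : forall t, 0 <= t <= 1 -> derivable_pt_lim psi t (dpsi t).
  move=> t _; apply: derivable_pt_lim_minus; first exact: derivable_along_line.
  apply: derivable_pt_lim_plus.
  - have := derivable_pt_lim_mult id (fct_cte (inner (g w) v)) t 1 0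
      (derivable_pt_lim_id t) (derivable_pt_lim_const _ t).
    by rewrite /id /fct_cte Rmult_0_r Rplus_0_r Rmult_1_l.
  - exact/derivable_pt_lim_scal/derivable_pt_lim_mult/derivable_pt_lim_id/derivable_pt_lim_id.
have [c [Hc Hc01]] := MVT_cor2 psi dpsi 0 1 Rlt_0_1 Hd.
have Hneg : dpsi c <= 0.
  have Hpc : inX l u (vadd w (vscal c v)) by apply: inX_segment => //; lra.
  have := HLip _ _ Hpc Hw.
  have -> : vsub (vadd w (vscal c v)) w = vscal c v.
    by apply: vec_ext => i; rewrite /vsub /vadd /vscal; ring.
  rewrite norm_scal Rabs_pos_eq; last lra.
  have Hdiff : inner (g (vadd w (vscal c v))) v - inner (g w) v =
      inner (vsub (g (vadd w (vscal c v))) (g w)) v.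
    by rewrite /inner -sumI_sub; apply: sumI_ext => i; rewrite /vsub; ring.
  have := inner_le_norm (vsub (g (vadd w (vscal c v))) (g w)) v.
  have := norm_nonneg v; have := norm_sq v.
  have := norm_nonneg (vsub (g (vadd w (vscal c v))) (g w)).
  by rewrite /dpsi => *; nra.
have Hz1 : vadd w (vscal 1 v) = z by apply: vec_ext => i; rewrite /vadd /vscal /v /vsub; ring.
have Hz0 : vadd w (vscal 0 v) = w by apply: vec_ext => i; rewrite /vadd /vscal; ring.
by move: Hc; rewrite /psi Hz1 Hz0; nra.
Qed.

Hypothesis Hcvx : convex f.

(* Convexity bounds the difference quotients of [f] at [w] towards [z] by [f z - f w]; they tend
   to the directional derivative. *)
Lemma convex_gradient_ineq w z : f w + inner (g w) (vsub z w) <= f z.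
Proof.
set v := vsub z w.
have Hw0 : vadd w (vscal 0 v) = w by apply: vec_ext => i; rewrite /vadd /vscal; ring.
have Hd := derivable_along_line w v 0; rewrite Hw0 in Hd.
suff : inner (g w) v <= f z - f w by lra.
apply: Rle_plus_epsilon => e He; have [d Hdel] := Hd e He.
set h := Rmin 1 (d / 2).
have Hh0 : 0 < h by apply: Rmin_pos; have := cond_pos d; lra.
have Hh1 : h <= 1 := Rmin_l _ _.
have Hhd : Rabs h < d.
  have Hh2 : h <= d / 2 := Rmin_r _ _.
  by rewrite Rabs_pos_eq; have := cond_pos d; lra.
have /Rabs_le_inv [Hq _] := Rlt_le _ _ (Hdel h ltac:(lra) Hhd).
rewrite /= Hw0 in Hq.
have Hc := Hcvx z w h (conj (Rlt_le _ _ Hh0) Hh1).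
have Hseg : vadd (vscal h z) (vscal (1 - h) w) = vadd w (vscal (0 + h) v).
  by apply: vec_ext => i; rewrite /vadd /vscal /v /vsub; ring.
rewrite Hseg in Hc.
have : (f (vadd w (vscal (0 + h) v)) - f w) / h <= f z - f w.
  apply: (Rmult_le_reg_r h) => //; rewrite /Rdiv Rmult_assoc Rinv_l; lra.
lra.
Qed.

End Gradient.

Definition strict_incr (phi : nat -> nat) := forall j, (phi j < phi (S j))%nat.

Lemma strict_incr_ge phi : strict_incr phi -> forall j, (j <= phi j)%nat.
Proof. by move=> H; elim=> [|j IH] //; have := H j; lia. Qed.

Lemma strict_incr_mono phi : strict_incr phi -> forall i j, (i <= j)%nat -> (phi i <= phi j)%nat.
Proof.
move=> H i j Hij; have -> : j = (i + (j - i))%nat by lia.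
by elim: (j - i)%nat => [|m IH]; rewrite ?addn0 // addnS; have := H (i + m)%nat; lia.
Qed.

Lemma strict_incr_comp phi psi : strict_incr phi -> strict_incr psi ->
  strict_incr (fun j => phi (psi j)).
Proof.
move=> H1 H2 j; have := strict_incr_mono phi H1 (psi j).+1 (psi j.+1) (H2 j).
by have := H1 (psi j); lia.
Qed.

Lemma Un_cv_subseq a c phi : strict_incr phi -> Un_cv a c -> Un_cv (fun j => a (phi j)) c.
Proof.
move=> Hs H e He; have [N HN] := H e He; exists N => j Hj; apply: HN.
by have := strict_incr_ge phi Hs j; lia.
Qed.

(* Stdlib's [Bolzano_Weierstrass] only provides a cluster value; a subsequence converging to it
   is extracted by choice. *)
Lemma interval_cv_subseq (a : nat -> R) lo hi : (forall k, lo <= a k <= hi) ->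
  exists phi c, strict_incr phi /\ Un_cv (fun j => a (phi j)) c.
Proof.
move=> Ha.
have [c Hc] := Bolzano_Weierstrass a (fun c => lo <= c <= hi) (compact_P3 lo hi) Ha.
have Hsel : forall N j, exists p, (N <= p)%nat /\ Rabs (a p - c) < / INR (S j).
  move=> N j; have Hp : 0 < / INR (S j) by apply/Rinv_0_lt_compat/lt_0_INR; lia.
  have [p [Hp1 Hp2]] := Hc (disc c (mkposreal _ Hp)) N ltac:(by exists (mkposreal _ Hp)).
  by exists p; split; [apply/leP|].
pose sel N j := proj1_sig (constructive_indefinite_description _ (Hsel N j)).
have Hsel1 N j : (N <= sel N j)%nat /\ Rabs (a (sel N j) - c) < / INR (S j).
  exact: (proj2_sig (constructive_indefinite_description _ (Hsel N j))).
pose phi := fix phi j := match j with O => sel O O | S j' => sel (S (phi j')) j end.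
exists phi, c; split; first by move=> j; exact: (Hsel1 (S (phi j)) (S j)).1.
move=> e He; have [N [HN HN0]] := archimed_cor1 e He; exists N => j Hj.
have Hj2 : Rabs (a (phi j) - c) < / INR (S j).
  by case: j Hj => [|j] _; [exact: (Hsel1 O O).2 | exact: (Hsel1 (S (phi j)) (S j)).2].
apply: Rlt_trans Hj2 (Rle_lt_trans _ _ _ _ HN).
by apply: Rinv_le_contravar; [apply: lt_0_INR; lia | apply: le_INR; lia].
Qed.

Section BoxSequence.
Context {n : nat}.
Variables (l u : vec n) (x : nat -> vec n).
Hypothesis Hx : forall k, inX l u (x k).

Lemma inX_cluster_point_exists : exists xs, cluster_point x xs.
Proof.
have Hall : forall s : seq 'I_n, exists phi (c : vec n), strict_incr phi /\
    forall i, i \in s -> Un_cv (fun j => x (phi j) i) (c i).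
  elim=> [|a s [phi [c [Hphi Hc]]]].
    by exists (fun j : nat => j), (fun _ => 0); split => // j /=; lia.
  have [psi [ca [Hpsi Hca]]] :=
    interval_cv_subseq (fun j => x (phi j) a) (l a) (u a) (fun k => Hx (phi k) a).
  exists (fun j => phi (psi j)), (fun i => if i == a then ca else c i).
  split; first exact: strict_incr_comp.
  move=> i; rewrite in_cons; case: (eqVneq i a) => [->|Hia] Hi; first exact: Hca.
  exact: (Un_cv_subseq (fun j => x (phi j) i) _ _ Hpsi (Hc i Hi)).
have [phi [c [Hphi Hc]]] := Hall (enum 'I_n).
exists c => e He N.
set eta := e / (sqrt (INR n) + 1).
have Hsq := sqrt_pos (INR n).
have Heta : 0 < eta by apply: Rdiv_lt_0_compat; lra.
have [J HJ] := finite_eventually (fun i j => Rabs (x (phi j) i - c i) < eta)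
   ltac:(move=> i; have [J HJ] := Hc i ltac:(by rewrite mem_enum) eta Heta;
         by exists J => k /leP /HJ).
exists (phi (maxn J N)); split; first exact: leq_trans (leq_maxr J N) (strict_incr_ge _ Hphi _).
apply: Rle_lt_trans (norm_le_coord_bound _ eta (Rlt_le _ _ Heta) _) _.
  by move=> i; apply: Rlt_le; apply: HJ (leq_maxl _ _) i.
have -> : sqrt (INR n) * eta = e - eta by rewrite /eta; field; lra.
lra.
Qed.

Lemma inX_bounded_seq : bounded_seq x.
Proof.
set M := sumI (fun i => Rabs (l i) + Rabs (u i)).
have HM i : Rabs (l i) + Rabs (u i) <= M.
  apply: (sumI_ge_term (fun i => Rabs (l i) + Rabs (u i))) => j.
  by have := Rabs_pos (l j); have := Rabs_pos (u j); lra.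
exists (sqrt (INR n) * M) => k; apply: norm_le_coord_bound.
  by apply: sumI_nonneg => i; have := Rabs_pos (l i); have := Rabs_pos (u i); lra.
move=> i; apply: Rle_trans (HM i); have := Hx k i.
by rewrite /Rabs; repeat case: Rcase_abs; lra.
Qed.

Lemma cluster_point_inX xs : cluster_point x xs -> inX l u xs.
Proof.
move=> Hc i; split; apply: Rnot_lt_le => h.
- have [k [_ Hk]] := Hc (l i - xs i) ltac:(lra) O.
  have := coord_le_norm (vsub (x k) xs) i; have := Hx k i; have := Rle_abs (x k i - xs i).
  rewrite /vsub /= in Hk *; lra.
- have [k [_ Hk]] := Hc (xs i - u i) ltac:(lra) O.
  have := coord_le_norm (vsub (x k) xs) i; have := Hx k i; have := Rle_abs (- (x k i - xs i)).
  rewrite Rabs_Ropp /vsub /= in Hk *; lra.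
Qed.

End BoxSequence.

Definition limsup_nonpos (a : nat -> R) :=
  forall e, 0 < e -> exists K, forall k, (K <= k)%nat -> a k <= e.

Fixpoint seg_sum (a : nat -> R) (K m : nat) : R :=
  match m with O => 0 | S m' => seg_sum a K m' + a (K + m')%nat end.

Lemma seg_sum_le a b K m : (forall j, a j <= b j) -> seg_sum a K m <= seg_sum b K m.
Proof. by move=> H; elim: m => [|m IH] /=; [lra | have := H (K + m)%nat; lra]. Qed.

Lemma seg_sum_scal a c K m : seg_sum (fun j => c * a j) K m = c * seg_sum a K m.
Proof. by elim: m => [|m IH] /=; [lra | rewrite IH; lra]. Qed.

Lemma seg_sum_shift a K m : seg_sum (fun j => a (S j)) K m = seg_sum a (S K) m.
Proof. by elim: m => [|m IH] //=; rewrite IH addSn. Qed.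

Lemma seg_sum_telescope h K m : seg_sum (fun j => h j - h (S j)) K m = h K - h (K + m)%nat.
Proof. by elim: m => [|m IH] /=; [rewrite addn0; lra | rewrite IH addnS; lra]. Qed.

Lemma seg_sum_telescope_le a t K m : (forall j, (K <= j)%nat -> a (S j) <= a j + t j) ->
  a (K + m)%nat <= a K + seg_sum t K m.
Proof.
move=> H; elim: m => [|m IH] /=; first by rewrite addn0; lra.
by rewrite addnS; have := H (K + m)%nat (leq_addr _ _); lra.
Qed.

Lemma inertial_seg_sum a b om K : 0 <= om < 1 -> (forall j, 0 <= a j) ->
  (forall j, (K <= j)%nat -> a (S j) <= om * a j + b j) ->
  forall m, seg_sum a K m <= (a K + seg_sum b K m) / (1 - om).
Proof.
move=> Hom Ha Hrec.
have Hind : forall m, (1 - om) * seg_sum a K (S m) + om * a (K + m)%nat <= a K + seg_sum b K m.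
  elim=> [|m IH]; first by rewrite /= addn0; lra.
  change (seg_sum a K m.+2) with (seg_sum a K m.+1 + a (K + m.+1)%nat).
  change (seg_sum b K m.+1) with (seg_sum b K m + b (K + m)%nat).
  by rewrite addnS; have := Hrec (K + m)%nat (leq_addr _ _); nra.
move=> m; have := Hind m; have := Ha (K + m)%nat; rewrite /= => *.
apply: (Rmult_le_reg_r (1 - om)); first lra.
rewrite /Rdiv Rmult_assoc Rinv_l ?Rmult_1_r; nra.
Qed.

Lemma inertial_limsup_nonpos a b om M : 0 <= om < 1 -> (forall k, 0 <= a k <= M) ->
  (forall k, a (S k) <= om * a k + b k) -> limsup_nonpos b -> limsup_nonpos a.
Proof.
move=> Hom Ha Hrec Hb e He.
have HM : 0 <= M by have := Ha O; lra.
have [K1 HK1] := Hb (e * (1 - om) / 2) ltac:(apply: Rmult_lt_0_compat; nra).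
have Hind : forall j, a (K1 + j)%nat <= om ^ j * M + e / 2.
  elim=> [|j IH]; first by rewrite addn0 /=; have := Ha K1; lra.
  rewrite addnS /=; have := Hrec (K1 + j)%nat; have := HK1 (K1 + j)%nat (leq_addr _ _).
  have : om * a (K1 + j)%nat <= om * (om ^ j * M + e / 2) by apply: Rmult_le_compat_l; lra.
  lra.
have [J HJ] := pow_lt_1_zero om ltac:(rewrite Rabs_pos_eq; lra) (e / (2 * (M + 1)))
  ltac:(apply: Rdiv_lt_0_compat; lra).
exists (K1 + J)%nat => k Hk; have -> : k = (K1 + (k - K1))%nat by lia.
apply: Rle_trans (Hind _) _.
have := HJ (k - K1)%nat ltac:(lia); rewrite Rabs_pos_eq; last by apply: pow_le; lra.
move=> Hpow; suff : om ^ (k - K1) * M <= e / 2 by lra.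
apply: Rle_trans _ (mul_div_succ_le M (e / 2) HM ltac:(lra)).
rewrite Rmult_comm; apply: Rmult_le_compat_l => //.
have -> : e / 2 / (M + 1) = e / (2 * (M + 1)) by field; lra.
lra.
Qed.

(* The positive parts of the increments of [phi] obey an inertial recursion driven by [d], which
   itself is driven by [b]; so their tail sums are small, and [phi] stays small after any index
   where it is small. *)
Lemma inertial_fejer_limsup_nonpos (phi d b : nat -> R) om K0 : 0 <= om < 1 ->
  (forall j, 0 <= phi j) -> (forall j, 0 <= d j) ->
  (forall j, phi (S j) <= 2 * phi j + 2 * d j) ->
  (forall j, (K0 <= j)%nat ->
     Rmax 0 (phi (S (S j)) - phi (S j)) <= om * Rmax 0 (phi (S j) - phi j) + 2 * d j) ->
  (forall j, d (S j) <= om * d j + b j) ->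
  limsup_nonpos d ->
  (forall e, 0 < e -> exists N, forall K m, (N <= K)%nat -> seg_sum b K m <= e) ->
  (forall e N, 0 < e -> exists k, (N <= k)%nat /\ phi k <= e) ->
  limsup_nonpos phi.
Proof.
move=> Hom Hphi0 Hd0 Hphi_step Hth Hd Hd_lim Hb_tail Hphi_clu e He.
set th := fun j => Rmax 0 (phi (S j) - phi j).
have Hth0 j : 0 <= th j := Rmax_l _ _.
set c := / (1 - om).
have Hc : 1 <= c.
  rewrite /c -Rinv_1; apply: Rinv_le_contravar; lra.
set A := 1 + c * (3 + 4 * c).
have HA : 1 <= A by rewrite /A; nra.
set eps := e / A.
have Heps : 0 < eps by apply: Rdiv_lt_0_compat; lra.
have [N1 HN1] := Hd_lim eps Heps.
have [N2 HN2] := Hb_tail eps Heps.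
have [K [HK HphiK]] := Hphi_clu eps (maxn K0 (maxn N1 N2)) Heps.
have HdK : d K <= eps by apply: HN1; lia.
have HthK : th K <= 3 * eps.
  by apply: Rmax_lub; [lra | have := Hphi_step K; have := Hphi0 K; lra].
have Hsum_d m : seg_sum d K m <= 2 * c * eps.
  apply: Rle_trans (inertial_seg_sum d b om K Hom Hd0 (fun j _ => Hd j) m) _.
  have := HN2 K m ltac:(lia); rewrite /Rdiv -/c; nra.
have Hsum_th m : seg_sum th K m <= c * (3 + 4 * c) * eps.
  have := inertial_seg_sum th (fun j => 2 * d j) om K Hom Hth0 (fun j Hj => Hth j ltac:(lia)) m.
  rewrite seg_sum_scal /Rdiv -/c; have := Hsum_d m; nra.
exists K => k Hk; have -> : k = (K + (k - K))%nat by lia.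
have := seg_sum_telescope_le phi th K (k - K)
  ltac:(by move=> j _; have := Rmax_r 0 (phi (S j) - phi j); rewrite -/(th j); lra).
have -> : e = A * eps by rewrite /eps; field; lra.
have := Hsum_th (k - K)%nat; rewrite /A; lra.
Qed.

Definition nonzero_ind (t : R) : R := if Req_EM_T t 0 then 0 else 1.

Lemma nonzero_ind0 : nonzero_ind 0 = 0.
Proof. by rewrite /nonzero_ind; case: (Req_EM_T 0 0) => h /=; lra. Qed.

Lemma nonzero_indN t : t <> 0 -> nonzero_ind t = 1.
Proof. by rewrite /nonzero_ind; case: (Req_EM_T t 0). Qed.

Lemma nonzero_ind_bound t : 0 <= nonzero_ind t <= 1.
Proof. by rewrite /nonzero_ind; case: (Req_EM_T t 0) => ? /=; lra. Qed.

Section L0.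
Context {n : nat}.
Implicit Types (a b : vec n).

Definition same_support a b := forall i, a i = 0 <-> b i = 0.

Lemma l0_le_support a b : (forall i, b i = 0 -> a i = 0) -> l0 a <= l0 b.
Proof.
move=> H; apply: sumI_le => i; rewrite -!/(nonzero_ind _).
case: (Req_dec (b i) 0) => [h|h]; first by rewrite h (H i h); lra.
by rewrite (nonzero_indN _ h); exact: (nonzero_ind_bound _).2.
Qed.

Lemma l0_same_support a b : same_support a b -> l0 a = l0 b.
Proof.
by move=> H; apply: Rle_antisym; apply: l0_le_support => i /H.
Qed.

Lemma l0_add1_le a b j : (forall i, a i <> 0 -> b i <> 0) -> a j = 0 -> b j <> 0 ->
  l0 a + 1 <= l0 b.
Proof.
move=> H Ha Hb; apply: (sumI_le_add1 _ _ j) => [i|]; rewrite -!/(nonzero_ind _).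
- case: (Req_dec (a i) 0) => h; first by rewrite h nonzero_ind0; exact: (nonzero_ind_bound _).1.
  by rewrite (nonzero_indN _ h) (nonzero_indN _ (H i h)); lra.
- by rewrite Ha nonzero_ind0 (nonzero_indN _ Hb); lra.
Qed.

End L0.

Section SparseSequence.
Context {n : nat}.
Variables (x : nat -> vec n) (d : R).
Hypotheses (Hd : 0 < d) (Hthr : forall k i, x (S k) i <> 0 -> d <= Rabs (x (S k) i)).

Lemma cluster_point_nonzero_ge xs : cluster_point x xs ->
  forall i, xs i <> 0 -> d / 2 <= Rabs (xs i).
Proof.
move=> Hc i Hi; apply: Rnot_lt_le => h.
have Hxs := Rabs_pos_lt _ Hi.
set e := Rmin (Rabs (xs i)) (d / 2 - Rabs (xs i)).
have He1 : e <= Rabs (xs i) := Rmin_l _ _.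
have He2 : e <= d / 2 - Rabs (xs i) := Rmin_r _ _.
have [k [Hk1 Hk]] := Hc e ltac:(apply: Rmin_pos; lra) 1%nat.
have Hcomp := Rle_lt_trans _ _ _ (coord_dist_le (x k) xs i) Hk.
case: k Hk1 Hk Hcomp => [//|k] _ _ Hcomp.
have Hnz : x (S k) i <> 0 by move=> h0; rewrite h0 Rminus_0_l Rabs_Ropp in Hcomp; lra.
have := Hthr k i Hnz; have := Rabs_triang (x (S k) i - xs i) (xs i).
have -> : x (S k) i - xs i + xs i = x (S k) i by ring.
lra.
Qed.

Lemma cluster_point_same_support xs : cluster_point x xs ->
  forall e N, 0 < e -> exists k, (N <= k)%nat /\ norm (vsub (x k) xs) < e /\ same_support (x k) xs.
Proof.
move=> Hc e N He.
have [k [Hk1 Hk]] := Hc (Rmin e (d / 2)) ltac:(apply: Rmin_pos; lra) (maxn N 1).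
exists k; split; first by lia.
split; first exact: Rlt_le_trans Hk (Rmin_l _ _).
case: k Hk1 Hk => [|k] Hk1 Hk; first by lia.
move=> i; have Hi := Rle_lt_trans _ _ _ (coord_dist_le (x (S k)) xs i) Hk.
have Hm := Rmin_r e (d / 2).
split => h0; apply: NNPP => hn; rewrite h0 ?Rminus_0_l ?Rminus_0_r ?Rabs_Ropp in Hi.
- by have := cluster_point_nonzero_ge xs Hc i hn; lra.
- by have := Hthr k i hn; lra.
Qed.

Lemma support_eventually_constant xs : cluster_point x xs ->
  limsup_nonpos (fun k => sqnorm (vsub (x (S k)) (x k))) ->
  exists K, forall k, (K <= k)%nat -> same_support (x k) xs.
Proof.
move=> Hc Hstep_lim.
have [K1 HK1] := Hstep_lim (d * d / 4) ltac:(nra).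
have Hstep k : (maxn K1 1 <= k)%nat -> same_support (x (S k)) (x k).
  move=> Hk; have /norm_lt_of_sqnorm Hn : sqnorm (vsub (x (S k)) (x k)) < d * d.
    by have := HK1 k ltac:(lia); nra.
  move=> i; have Hi := Rle_lt_trans _ _ _ (coord_dist_le (x (S k)) (x k) i) (Hn Hd).
  case: k Hk Hn Hi => [|k] Hk _ Hi; first by lia.
  split => h0; apply: NNPP => hn; rewrite h0 ?Rminus_0_l ?Rminus_0_r ?Rabs_Ropp in Hi.
  - by have := Hthr k i hn; lra.
  - by have := Hthr (S k) i hn; lra.
have [K0 [HK0 [_ HsK0]]] := cluster_point_same_support xs Hc 1 (maxn K1 1) Rlt_0_1.
exists K0 => k Hk; have -> : k = (K0 + (k - K0))%nat by lia.
elim: (k - K0)%nat => [|m IH]; first by rewrite addn0.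
by rewrite addnS => i; have := Hstep (K0 + m)%nat ltac:(lia) i; have := IH i; tauto.
Qed.

End SparseSequence.

(* Near [xs], a point either leaves the support of [xs], which costs [lam] in [l0] and only
   [O (|z - xs|)] in [f], or stays in it, where [xs] minimizes [f]. *)
Lemma support_min_local_min {n} lam (f : vec n -> R) g (l u xs : vec n) :
  0 < lam -> is_gradient f g -> inX l u xs ->
  (forall z, inX l u z -> (forall i, xs i = 0 -> z i = 0) -> f xs <= f z) ->
  local_min lam f l u xs.
Proof.
move=> Hlam Hg Hxs Hface; split => //.
set F := fun i => if Req_EM_T (xs i) 0 then 1 else Rabs (xs i).
have [d [Hd Hdle]] : exists d, 0 < d /\ forall i, d <= F i.
  by apply: finite_pos_lb => i; rewrite /F; case: Req_EM_T => h /=; [lra | apply: Rabs_pos_lt].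
have [r [C [Hr [HC Hlip]]]] := gradient_local_lipschitz f g Hg xs.
set rho := Rmin (Rmin r d) (lam / (C + 1)).
have Hrho : 0 < rho by repeat apply: Rmin_pos; try lra; apply: Rdiv_lt_0_compat; lra.
have Hr1 : rho <= r := Rle_trans _ _ _ (Rmin_l _ _) (Rmin_l _ _).
have Hr2 : rho <= d := Rle_trans _ _ _ (Rmin_l _ _) (Rmin_r _ _).
have Hr3 : rho <= lam / (C + 1) := Rmin_r _ _.
exists rho; split => // z Hz Hn.
have Hsup i : xs i <> 0 -> z i <> 0.
  move=> hi h0; have := Hdle i; rewrite /F; case: Req_EM_T => //= _.
  by have := coord_dist_le z xs i; rewrite h0 Rminus_0_l Rabs_Ropp; lra.
have /Rabs_le_inv [Hf _] := Hlip z ltac:(lra).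
case: (classic (exists j, xs j = 0 /\ z j <> 0)) => [[j [Hj1 Hj2]]|Hno].
- have Hl0 := l0_add1_le xs z j Hsup Hj1 Hj2.
  have : C * norm (vsub z xs) <= lam.
    apply: Rle_trans (mul_div_succ_le C lam HC (Rlt_le _ _ Hlam)).
    by apply: Rmult_le_compat_l; lra.
  by rewrite /Hfin; nra.
- have Hs i : xs i = 0 -> z i = 0 by move=> hi; apply: NNPP => hz; apply: Hno; exists i.
  have Hl0 : l0 z = l0 xs.
    by apply: l0_same_support => i; split; [move=> hz; apply: NNPP => /Hsup | apply: Hs].
  by have := Hface z Hz Hs; rewrite /Hfin Hl0; lra.
Qed.

Lemma linear_quadratic_nonneg A B : 0 <= B ->
  (forall t, 0 < t <= 1 -> 0 <= t * A + t * t * B) -> 0 <= A.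
Proof.
move=> HB H; case: (Rle_lt_dec 0 A) => // HA.
set t := Rmin 1 (- A / (2 * B + 1)).
have Ht0 : 0 < t by apply: Rmin_pos; [lra | apply: Rdiv_lt_0_compat; lra].
have Ht2 : t * (2 * B + 1) <= - A.
  have -> : - A = - A / (2 * B + 1) * (2 * B + 1) by field; lra.
  by apply: Rmult_le_compat_r; [lra | exact: Rmin_r].
by have := H t (conj Ht0 (Rmin_l _ _)); nra.
Qed.

Definition subproblem_min {n} lam L mu (l u : vec n) g (y xp : vec n) :=
  inX l u xp /\ forall z, inX l u z -> subobj lam L mu g y xp <= subobj lam L mu g y z.

Definition prox_smooth {n} L mu (g : vec n -> vec n) (y z : vec n) :=
  L / 2 * sqnorm (vadd (vsub z y) (vscal (1 / L) (g y))) + mu / 2 * sqnorm (vsub z y).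

Section Subproblem.
Context {n : nat} {lam L mu : R} {l u : vec n} {g : vec n -> vec n}.
Hypotheses (Hlam : 0 < lam) (HL : 0 < L) (Hmu : 0 < mu).
Local Notation subproblem_min := (subproblem_min lam L mu l u g).
Local Notation prox_smooth := (prox_smooth L mu g).

Lemma subobj_split y z : subobj lam L mu g y z = lam * l0 z + prox_smooth y z.
Proof. by rewrite /subobj /prox_smooth; ring. Qed.

Lemma prox_smooth_expand y z : prox_smooth y z =
  inner (g y) (vsub z y) + (L + mu) / 2 * sqnorm (vsub z y) + 1 / (2 * L) * sqnorm (g y).
Proof.
rewrite /prox_smooth /sqnorm /inner -!sumI_scal -!sumI_add.
by apply: sumI_ext => i; rewrite /vadd /vsub /vscal; field; lra.
Qed.

Lemma prox_smooth_center y : prox_smooth y y = 1 / (2 * L) * sqnorm (g y).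
Proof.
have H0 a : inner a (vsub y y) = 0.
  by rewrite /inner (sumI_ext _ (fun _ => 0)) ?sumI_const => [|i]; rewrite /vsub; ring.
by rewrite prox_smooth_expand /sqnorm !H0; ring.
Qed.

Lemma subproblem_descent f y xp :
  is_gradient f g ->
  (forall z w, inX l u z -> inX l u w -> norm (vsub (g z) (g w)) <= L * norm (vsub z w)) ->
  inX l u y -> subproblem_min y xp ->
  Hfin lam f xp + mu / 2 * sqnorm (vsub xp y) <= lam * l0 y + f y.
Proof.
move=> Hg HLip Hy [Hxp Hmin].
have := Hmin y Hy; rewrite !subobj_split prox_smooth_center prox_smooth_expand.
by have := descent_lemma f g Hg L l u HLip y xp Hy Hxp; rewrite /Hfin; lra.
Qed.

(* [xp] minimizes the strongly convex [prox_smooth y] over the face of the box given by the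
   support of [xp], so the usual three-point inequality holds on that face. *)
Lemma subproblem_three_point y xp z : subproblem_min y xp -> inX l u z ->
  (forall i, xp i = 0 -> z i = 0) ->
  prox_smooth y xp + (L + mu) / 2 * sqnorm (vsub z xp) <= prox_smooth y z.
Proof.
move=> [Hxp Hmin] Hz Hsupp; set v := vsub z xp.
set A := sumI (fun i => ((L + mu) * (xp i - y i) + g y i) * v i).
set B := (L + mu) / 2 * sqnorm v.
have Hid t : prox_smooth y (vadd xp (vscal t v)) = prox_smooth y xp + t * A + t * t * B.
  rewrite !prox_smooth_expand /A /B /sqnorm /inner -!sumI_scal -!sumI_add.
  by apply: sumI_ext => i; rewrite /vadd /vsub /vscal /v /vsub; field; lra.
have HB : 0 <= B by apply: Rmult_le_pos; [lra | exact: sqnorm_nonneg].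
have HA : 0 <= A.
  apply: (linear_quadratic_nonneg A B HB) => t Ht.
  have Hw := inX_segment l u xp z t Hxp Hz ltac:(lra); rewrite -/v in Hw.
  have Hl0 : l0 (vadd xp (vscal t v)) <= l0 xp.
    by apply: l0_le_support => i hi; rewrite /vadd /vscal /v /vsub hi (Hsupp i hi); ring.
  have := Rmult_le_compat_l lam _ _ (Rlt_le _ _ Hlam) Hl0.
  by have := Hmin _ Hw; rewrite !subobj_split Hid; lra.
have Hz1 : vadd xp (vscal 1 v) = z by apply: vec_ext => i; rewrite /vadd /vscal /v /vsub; ring.
by have := Hid 1; rewrite Hz1; lra.
Qed.
Lemma subproblem_key_ineq f y xp z : convex f -> is_gradient f g ->
  (forall z w, inX l u z -> inX l u w -> norm (vsub (g z) (g w)) <= L * norm (vsub z w)) ->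
  inX l u y -> subproblem_min y xp -> inX l u z -> (forall i, xp i = 0 -> z i = 0) ->
  f xp + (L + mu) / 2 * sqnorm (vsub z xp) + mu / 2 * sqnorm (vsub xp y)
    <= f z + (L + mu) / 2 * sqnorm (vsub z y).
Proof.
move=> Hcvx Hg HLip Hy Hm Hz Hs.
have := subproblem_three_point y xp z Hm Hz Hs; rewrite !prox_smooth_expand.
have := descent_lemma f g Hg L l u HLip y xp Hy Hm.1.
have := convex_gradient_ineq f g Hg Hcvx y z.
lra.
Qed.

(* Zeroing the [i]-th entry of [xp] gives an admissible point, which saves [lam] in [l0] and
   changes the smooth part by at most [|xp i| B]. *)
Lemma subproblem_nonzero_ge y xp i B : subproblem_min y xp -> l i <= 0 <= u i -> xp i <> 0 ->
  Rabs ((L + mu) * y i - g y i) <= B -> lam / (B + 1) <= Rabs (xp i).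
Proof.
move=> [Hxp Hmin] Hi Hnz HB.
set z := fun j => if j == i then 0 else xp j.
have Hz : inX l u z by move=> j; rewrite /z; case: (eqVneq j i) => [->|_]; [lra | exact: Hxp].
set sc := fun j t => lam * nonzero_ind t +
  L / 2 * ((t - y j + 1 / L * g y j) * (t - y j + 1 / L * g y j)) + mu / 2 * ((t - y j) * (t - y j)).
have Hs w : subobj lam L mu g y w = sumI (fun j => sc j (w j)).
  rewrite /subobj /l0 /sqnorm /inner -!sumI_scal -!sumI_add.
  by apply: sumI_ext => j; rewrite /sc /vadd /vsub /vscal -/(nonzero_ind _); ring.
have : sumI (fun j => sc j (xp j) - sc j (z j)) <= 0.
  by rewrite sumI_sub -!Hs; have := Hmin z Hz; lra.
rewrite (sumI_single _ i) => [|j hj]; last by rewrite /z (negbTE hj); ring.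
have Hsc t : sc i t - sc i 0 =
    lam * nonzero_ind t + (L + mu) / 2 * (t * t) - t * ((L + mu) * y i - g y i).
  by rewrite /sc nonzero_ind0; field; lra.
rewrite /z eqxx Hsc nonzero_indN // => Hdiff.
have Hlam_le : lam <= xp i * ((L + mu) * y i - g y i).
  have : 0 <= (L + mu) / 2 * (xp i * xp i) by apply: Rmult_le_pos; nra.
  lra.
have : xp i * ((L + mu) * y i - g y i) <= Rabs (xp i) * B.
  apply: Rle_trans (Rle_abs _) _; rewrite Rabs_mult.
  by apply: Rmult_le_compat_l => //; exact: Rabs_pos.
have := Rabs_pos (xp i); have := Rabs_pos ((L + mu) * y i - g y i) => *.
apply: (Rmult_le_reg_r (B + 1)); first lra.
have -> : lam / (B + 1) * (B + 1) = lam by field; lra.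
nra.
Qed.

End Subproblem.

(* The right-hand side exceeds [(|a| + w |c|)^2] by [w / (1 - w) (|a| - (1 - w) |c|)^2]. *)
Lemma sqr_add_le_inertial a t c w : 0 <= w < 1 -> Rabs t <= w * Rabs c ->
  (a + t) * (a + t) <= a * a / (1 - w) + w * (c * c).
Proof.
move=> Hw Ht.
have HA := Rabs_pos a; have HC := Rabs_pos c.
have h1 : (a + t) * (a + t) <= (Rabs a + w * Rabs c) * (Rabs a + w * Rabs c).
  have h2 : Rabs (a + t) <= Rabs a + w * Rabs c by have := Rabs_triang a t; lra.
  rewrite -[(a + t) * _]/(Rsqr _) Rsqr_abs.
  by apply: Rmult_le_compat => //; exact: Rabs_pos.
have key : a * a / (1 - w) + w * (c * c) - (Rabs a + w * Rabs c) * (Rabs a + w * Rabs c)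
   = w / (1 - w) * ((Rabs a - (1 - w) * Rabs c) * (Rabs a - (1 - w) * Rabs c)).
  by rewrite -[a * a]/(Rsqr a) -[c * c]/(Rsqr c) (Rsqr_abs a) (Rsqr_abs c) /Rsqr; field; lra.
have : 0 <= w / (1 - w) * ((Rabs a - (1 - w) * Rabs c) * (Rabs a - (1 - w) * Rabs c)).
  apply: Rmult_le_pos; last exact: Rle_0_sqr.
  by apply: Rmult_le_pos; [lra | apply: Rlt_le; apply: Rinv_0_lt_compat; lra].
lra.
Qed.

Lemma inertial_pos_part_rec a0 a1 a2 b d om : 0 <= b <= om -> om <= 1 -> 0 <= d ->
  a2 <= (1 + b) * a1 - b * a0 + b * (1 + b) * d ->
  Rmax 0 (a2 - a1) <= om * Rmax 0 (a1 - a0) + 2 * d.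
Proof.
move=> Hb Hom Hd H; have Hm0 := Rmax_l 0 (a1 - a0); have Hm1 := Rmax_r 0 (a1 - a0).
have h1 : b * (a1 - a0) <= om * Rmax 0 (a1 - a0).
  apply: Rle_trans (Rmult_le_compat_l b _ _ ltac:(lra) Hm1) _.
  by apply: Rmult_le_compat_r; lra.
have h2 : b * (1 + b) * d <= 2 * d.
  apply: Rmult_le_compat_r => //.
  have : b * b <= 1 * 1 by apply: Rmult_le_compat; lra.
  lra.
have h3 : 0 <= om * Rmax 0 (a1 - a0) by apply: Rmult_le_pos; lra.
by apply: Rmax_lub; lra.
Qed.

Lemma box_sqdist_diff_le {n} (l u z a b : vec n) : inX l u z -> inX l u a -> inX l u b ->
  sqnorm (vsub z b) - sqnorm (vsub z a) <= 2 * sumI (fun j => u j - l j) * norm (vsub a b).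
Proof.
move=> Hz Ha Hb.
have -> : sqnorm (vsub z b) - sqnorm (vsub z a) =
    sumI (fun i => (a i - b i) * (2 * z i - a i - b i)).
  by rewrite /sqnorm /inner -sumI_sub; apply: sumI_ext => i; rewrite /vsub; ring.
rewrite Rmult_comm -sumI_scal -sumI_scal; apply: sumI_le => i.
have h1 := coord_le_norm (vsub a b) i.
have h2 : Rabs (2 * z i - a i - b i) <= 2 * (u i - l i).
  by have := Hz i; have := Ha i; have := Hb i => *; apply: Rabs_le; lra.
apply: Rle_trans (Rle_abs _) _; rewrite Rabs_mult.
by apply: Rmult_le_compat => //; exact: Rabs_pos.
Qed.

Section Algorithm.
Context {n : nat}.
Variables (lam L mu om : R) (l u : vec n) (f : vec n -> R) (g : vec n -> vec n).
Variables (oms : nat -> R) (x y : nat -> vec n).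
Hypotheses (Hlam : 0 < lam) (Hlu : forall i, l i <= u i) (Hcvx : convex f) (Hg : is_gradient f g).
Hypothesis HL : 0 < L.
Hypothesis HLip : forall z w, inX l u z -> inX l u w ->
  norm (vsub (g z) (g w)) <= L * norm (vsub z w).
Hypotheses (Hmu : 0 < mu) (Homs : forall k, 0 <= oms k <= om) (Hom : om < 1).
Hypothesis Halg : algorithm1 lam L mu l u g oms x y.

Let W := sumI (fun j => u j - l j).

Lemma safeguard_cases k : y (S k) = x k \/
  [/\ y (S k) = yhat x oms k, inX l u (yhat x oms k) &
      inner (vsub (yhat x oms k) (x k)) (g (yhat x oms k)) <= 0].
Proof.
have [_ /(_ k) [[Hreset Hkeep] _]] := Halg.
case: (classic (inner (vsub (yhat x oms k) (x k)) (g (yhat x oms k)) > 0 \/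
                ~ inX l u (yhat x oms k))) => Hc; first by left; exact: Hreset.
right; split; first exact: Hkeep.
- by apply: NNPP => h; apply: Hc; right.
- by apply: Rnot_lt_le => h; apply: Hc; left.
Qed.

Lemma iterate_inX k : inX l u (x k).
Proof. by case: k => [|k]; [exact: Halg.1 | have [_ /(_ k) [_ [? _]]] := Halg]. Qed.

Lemma extrapolated_inX k : inX l u (y (S k)).
Proof. by case: (safeguard_cases k) => [-> | [-> ? _]] //; exact: iterate_inX. Qed.

Lemma iterate_subproblem_min k : subproblem_min lam L mu l u g (y (S k)) (x (S k)).
Proof. by have [_ /(_ k) [_ ?]] := Halg. Qed.

Lemma extrapolated_coord k : exists b, 0 <= b <= om /\ forall i,
  y (S k) i = if Req_EM_T (x k i) 0 then x k i else x k i + b * (x k i - xprev x k i).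
Proof.
case: (safeguard_cases k) => [-> | [-> _ _]].
- by exists 0; split; [have := Homs k; lra | move=> i; case: Req_EM_T => ? /=; ring].
- by exists (oms k).
Qed.

Lemma H_descent k :
  Hfin lam f (x (S k)) + mu / 2 * sqnorm (vsub (x (S k)) (y (S k))) <= Hfin lam f (x k).
Proof.
have := subproblem_descent HL _ _ _ Hg HLip (extrapolated_inX k) (iterate_subproblem_min k).
suff : lam * l0 (y (S k)) + f (y (S k)) <= Hfin lam f (x k) by lra.
case: (safeguard_cases k) => [-> | [-> _ Hdir]]; first by rewrite /Hfin; lra.
have Hl0 : l0 (yhat x oms k) <= l0 (x k).
  by apply: l0_le_support => i hi; rewrite /yhat; case: Req_EM_T.
have := convex_gradient_ineq f g Hg Hcvx (yhat x oms k) (x k).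
have -> : inner (g (yhat x oms k)) (vsub (x k) (yhat x oms k)) =
          - inner (vsub (yhat x oms k) (x k)) (g (yhat x oms k)).
  by rewrite /inner -sumI_opp; apply: sumI_ext => i; rewrite /vsub; ring.
by have := Rmult_le_compat_l lam _ _ (Rlt_le _ _ Hlam) Hl0; rewrite /Hfin; lra.
Qed.

Lemma H_nonincreasing k m : (k <= m)%nat -> Hfin lam f (x m) <= Hfin lam f (x k).
Proof.
move=> Hkm; have -> : m = (k + (m - k))%nat by lia.
elim: (m - k)%nat => [|j IH]; first by rewrite addn0; lra.
rewrite addnS; have := H_descent (k + j)%nat.
by have := sqnorm_nonneg (vsub (x (k + j).+1) (y (k + j).+1)); nra.
Qed.

Lemma prox_input_bounded :
  exists B, 0 <= B /\ forall z i, inX l u z -> Rabs ((L + mu) * z i - g z i) <= B.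
Proof.
set M := sumI (fun j => Rabs (l j) + Rabs (u j)).
have HlX : inX l u l by move=> j; have := Hlu j; lra.
have HM : 0 <= M by apply: sumI_nonneg => j; have := Rabs_pos (l j); have := Rabs_pos (u j); lra.
have HW : 0 <= W by apply: sumI_nonneg => j; have := Hlu j; lra.
exists ((L + mu) * M + (norm (g l) + L * (sqrt (INR n) * W))); split.
  have h1 : 0 <= (L + mu) * M by apply: Rmult_le_pos; lra.
  have h2 : 0 <= L * (sqrt (INR n) * W).
    by apply: Rmult_le_pos; [lra | apply: Rmult_le_pos => //; exact: sqrt_pos].
  by have := norm_nonneg (g l); lra.
move=> z i Hz.
have Hzi : Rabs (z i) <= M.
  apply: Rle_trans (sumI_ge_term (fun j => Rabs (l j) + Rabs (u j)) i _).
    by have := Hz i; rewrite /Rabs; repeat case: Rcase_abs; lra.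
  by move=> j; have := Rabs_pos (l j); have := Rabs_pos (u j); lra.
have Hzl : norm (vsub z l) <= sqrt (INR n) * W.
  apply: norm_le_coord_bound => // j.
  rewrite /vsub Rabs_pos_eq; last by have := Hz j; lra.
  have := sumI_ge_term (fun j => u j - l j) j (fun j' => ltac:(have := Hlu j'; lra)).
  by have := Hz j; rewrite -/W; lra.
have Hgi : Rabs (g z i) <= norm (g l) + L * (sqrt (INR n) * W).
  have := coord_le_norm (g l) i; have := coord_dist_le (g z) (g l) i.
  have := HLip z l Hz HlX; have := Rmult_le_compat_l L _ _ (Rlt_le _ _ HL) Hzl.
  have := Rabs_triang (g z i - g l i) (g l i).
  have -> : g z i - g l i + g l i = g z i by ring.
  lra.
have Hm : Rabs ((L + mu) * z i) <= (L + mu) * M.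
  by rewrite Rabs_mult (Rabs_pos_eq (L + mu)); [apply: Rmult_le_compat_l; lra | lra].
by have := Rabs_triang ((L + mu) * z i) (- g z i); rewrite Rabs_Ropp -/(Rminus _ _); lra.
Qed.

Lemma iterate_nonzero_ge : exists d, 0 < d /\ forall k i, x (S k) i <> 0 -> d <= Rabs (x (S k) i).
Proof.
have [B [HB0 HB]] := prox_input_bounded.
set F := fun i =>
  if Rle_dec (l i) 0 then (if Rle_dec 0 (u i) then lam / (B + 1) else - u i) else l i.
have [d [Hd HdF]] : exists d, 0 < d /\ forall i, d <= F i.
  apply: finite_pos_lb => i; rewrite /F; case: Rle_dec => h1 /=; [case: Rle_dec => h2 /=|]; try lra.
  by apply: Rdiv_lt_0_compat; lra.
exists d; split => // k i Hnz; apply: Rle_trans (HdF i) _.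
have Hxi := iterate_inX (S k) i.
rewrite /F; case: Rle_dec => h1 /=; [case: Rle_dec => h2 /=|].
- apply: subproblem_nonzero_ge HL Hmu _ _ _ _ (iterate_subproblem_min k) _ Hnz _ => //.
  exact: HB (extrapolated_inX k).
- by rewrite Rabs_left; lra.
- by rewrite Rabs_pos_eq; lra.
Qed.

Lemma iterate_f_le k z : inX l u z -> (forall i, x (S k) i = 0 -> z i = 0) ->
  f (x (S k)) <= f z + (L + mu) * W * norm (vsub (x (S k)) (y (S k))).
Proof.
move=> Hz Hs.
have := subproblem_key_ineq Hlam HL Hmu _ _ _ _ Hcvx Hg HLip (extrapolated_inX k)
  (iterate_subproblem_min k) Hz Hs.
have := box_sqdist_diff_le l u z (x (S k)) (y (S k)) Hz (iterate_inX (S k)) (extrapolated_inX k).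
have := sqnorm_nonneg (vsub (x (S k)) (y (S k))); rewrite -/W => *.
have : (L + mu) / 2 * (sqnorm (vsub z (y (S k))) - sqnorm (vsub z (x (S k)))) <=
       (L + mu) / 2 * (2 * W * norm (vsub (x (S k)) (y (S k)))) by apply: Rmult_le_compat_l; lra.
nra.
Qed.

Lemma step_sq_rec k :
  sqnorm (vsub (x (S (S k))) (x (S k))) <=
  om * sqnorm (vsub (x (S k)) (x k)) + sqnorm (vsub (x (S (S k))) (y (S (S k)))) / (1 - om).
Proof.
have Hom0 : 0 <= om by have := Homs O; lra.
have [b [Hb Hy]] := extrapolated_coord (S k).
rewrite /sqnorm /inner -sumI_scal -sumI_div -sumI_add; apply: sumI_le => i; rewrite /vsub.
have -> : x k.+2 i - x k.+1 i = (x k.+2 i - y k.+2 i) + (y k.+2 i - x k.+1 i) by ring.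
rewrite [om * _ + _]Rplus_comm; apply: sqr_add_le_inertial; first lra.
rewrite Hy /=; case: Req_EM_T => _ /=.
  by rewrite Rminus_diag Rabs_R0; have := Rabs_pos (x k.+1 i - x k i); nra.
have -> : x k.+1 i + b * (x k.+1 i - x k i) - x k.+1 i = b * (x k.+1 i - x k i) by ring.
rewrite Rabs_mult Rabs_pos_eq; last lra.
by apply: Rmult_le_compat_r; [exact: Rabs_pos | lra].
Qed.

Section ClusterPoint.
Variable xs : vec n.
Hypothesis Hc : cluster_point x xs.

Lemma cluster_inX : inX l u xs.
Proof. exact: cluster_point_inX l u x iterate_inX xs Hc. Qed.

Lemma cluster_point_f_visits e N : 0 < e ->
  exists k, (N <= k)%nat /\ same_support (x k) xs /\ Rabs (f (x k) - f xs) <= e.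
Proof.
move=> He; have [d [Hd Hthr]] := iterate_nonzero_ge.
have [r [C [Hr [HC Hlip]]]] := gradient_local_lipschitz f g Hg xs.
have He' : 0 < Rmin r (e / (C + 1)) by apply: Rmin_pos; [|apply: Rdiv_lt_0_compat]; lra.
have [k [Hk [Hn Hs]]] := cluster_point_same_support x d Hd Hthr xs Hc _ N He'.
exists k; split => //; split => //.
apply: Rle_trans (Hlip _ (Rlt_le_trans _ _ _ Hn (Rmin_l _ _))) _.
apply: Rle_trans (mul_div_succ_le C e HC (Rlt_le _ _ He)).
by apply: Rmult_le_compat_l => //; apply: Rlt_le; exact: Rlt_le_trans Hn (Rmin_r _ _).
Qed.

Lemma H_cluster_le k : Hfin lam f xs <= Hfin lam f (x k).
Proof.
apply: Rle_plus_epsilon => e He.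
have [k' [Hk [Hs /Rabs_le_inv Hf]]] := cluster_point_f_visits e k He.
have := H_nonincreasing k k' Hk; rewrite /Hfin (l0_same_support _ _ Hs); lra.
Qed.

Lemma H_cv_cluster : Un_cv (fun k => Hfin lam f (x k)) (Hfin lam f xs).
Proof.
move=> e He; have [k0 [_ [Hs /Rabs_le_inv Hf]]] := cluster_point_f_visits (e / 2) O ltac:(lra).
have Hk0 : Hfin lam f (x k0) <= Hfin lam f xs + e / 2.
  by rewrite /Hfin (l0_same_support _ _ Hs); lra.
exists k0 => k /leP Hk; have h1 := H_nonincreasing k0 k Hk; have h2 := H_cluster_le k.
by rewrite /R_dist Rabs_pos_eq; lra.
Qed.

Lemma step_gap_seg_sum K m :
  seg_sum (fun j => sqnorm (vsub (x (S j)) (y (S j)))) K m <=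
  2 / mu * (Hfin lam f (x K) - Hfin lam f xs).
Proof.
have Hmu2 : 0 < 2 / mu by apply: Rdiv_lt_0_compat; lra.
apply: Rle_trans
  (seg_sum_le _ (fun j => 2 / mu * (Hfin lam f (x j) - Hfin lam f (x (S j)))) K m _) _.
  move=> j; have := H_descent j.
  have -> : 2 / mu * (Hfin lam f (x j) - Hfin lam f (x (S j))) =
            (Hfin lam f (x j) - Hfin lam f (x (S j))) / (mu / 2) by field; lra.
  move=> Hj; apply: (Rmult_le_reg_r (mu / 2)); first lra.
  by rewrite /Rdiv Rmult_assoc Rinv_l ?Rmult_1_r; lra.
rewrite seg_sum_scal (seg_sum_telescope (fun j => Hfin lam f (x j))).
by apply: Rmult_le_compat_l; [lra | have := H_cluster_le (K + m); lra].
Qed.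

Lemma step_gap_limsup_nonpos : limsup_nonpos (fun k => sqnorm (vsub (x (S k)) (y (S k)))).
Proof.
move=> e He; have [N HN] := H_cv_cluster (mu / 2 * e) ltac:(nra).
exists N => k /leP Hk; have := step_gap_seg_sum k 1; rewrite /= Rplus_0_l addn0 => HE.
apply: Rle_trans HE _; have := HN k Hk; rewrite /R_dist => /Rabs_def2 [HH _].
have -> : e = 2 / mu * (mu / 2 * e) by field; lra.
by apply: Rmult_le_compat_l; [apply: Rlt_le; apply: Rdiv_lt_0_compat |]; lra.
Qed.

(* Along iterates whose support is that of [xs], [f (x k)] tends to [f xs] while the
   extrapolation gap closes, so [iterate_f_le] passes to the limit. *)
Lemma cluster_support_min z : inX l u z -> (forall i, xs i = 0 -> z i = 0) -> f xs <= f z.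
Proof.
move=> Hz Hsz; apply: Rle_plus_epsilon => eta Heta.
have HW : 0 <= W by apply: sumI_nonneg => j; have := Hlu j; lra.
set c := (L + mu) * W.
have Hc0 : 0 <= c by apply: Rmult_le_pos; lra.
set e2 := eta / 2 / (c + 1).
have He2 : 0 < e2 by apply: Rdiv_lt_0_compat; lra.
have [K HK] := step_gap_limsup_nonpos (e2 * e2 / 2) ltac:(nra).
have [k [Hk [Hs /Rabs_le_inv Hf]]] := cluster_point_f_visits (eta / 2) (S K) ltac:(lra).
case: k Hk Hs Hf => [//|k] Hk Hs Hf.
have Hgap : norm (vsub (x (S k)) (y (S k))) < e2.
  apply: norm_lt_of_sqnorm => //; have := HK k ltac:(lia).
  have : 0 < e2 * e2 by nra.
  lra.
have := iterate_f_le k z Hz (fun i hi => Hsz i ((Hs i).1 hi)).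
have : c * norm (vsub (x (S k)) (y (S k))) <= eta / 2.
  apply: Rle_trans (mul_div_succ_le c (eta / 2) Hc0 ltac:(lra)).
  by rewrite -/e2; apply: Rmult_le_compat_l => //; lra.
rewrite -/c; lra.
Qed.

Lemma cluster_local_min : local_min lam f l u xs.
Proof. exact: support_min_local_min Hlam Hg cluster_inX cluster_support_min. Qed.

(* On a stable support the extrapolation acts on every coordinate, and the key inequality with
   [z := xs] makes [|x^k - xs|^2] an inertial Fejer sequence. *)
Lemma cluster_sqdist_rec j : (forall i, x (S j) i = 0 -> x j i = 0) ->
  same_support (x (S (S j))) xs ->
  Rmax 0 (sqnorm (vsub (x (S (S j))) xs) - sqnorm (vsub (x (S j)) xs)) <=
  om * Rmax 0 (sqnorm (vsub (x (S j)) xs) - sqnorm (vsub (x j) xs)) +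
  2 * sqnorm (vsub (x (S j)) (x j)).
Proof.
move=> Hsj Hs.
have Hkey := subproblem_key_ineq Hlam HL Hmu _ _ _ _ Hcvx Hg HLip (extrapolated_inX (S j))
  (iterate_subproblem_min (S j)) cluster_inX (fun i hi => (Hs i).1 hi).
have Hface := cluster_support_min _ (iterate_inX (S (S j))) (fun i hi => (Hs i).2 hi).
have Hgap := sqnorm_nonneg (vsub (x (S (S j))) (y (S (S j)))).
have [b [Hb Hy]] := extrapolated_coord (S j).
apply: (inertial_pos_part_rec _ _ _ b) => //; first lra; first exact: sqnorm_nonneg.
have -> : sqnorm (vsub (x (S (S j))) xs) = sqnorm (vsub xs (x (S (S j)))) by exact: sqnorm_vsub_sym.
have -> : (1 + b) * sqnorm (vsub (x (S j)) xs) - b * sqnorm (vsub (x j) xs) +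
    b * (1 + b) * sqnorm (vsub (x (S j)) (x j)) = sqnorm (vsub xs (y (S (S j)))).
  rewrite /sqnorm /inner -!sumI_scal -sumI_sub -sumI_add; apply: sumI_ext => i.
  rewrite /vsub Hy /=; case: Req_EM_T => [h|_] /=; last by ring.
  by rewrite h (Hsj i h); ring.
apply: (Rmult_le_reg_l ((L + mu) / 2)); first lra.
have : 0 <= mu / 2 * sqnorm (vsub (x (S (S j))) (y (S (S j)))) by apply: Rmult_le_pos; lra.
lra.
Qed.

Lemma gap_tail_sum_small e : 0 < e -> exists N, forall K m, (N <= K)%nat ->
  seg_sum (fun j => / (1 - om) * sqnorm (vsub (x (S (S j))) (y (S (S j))))) K m <= e.
Proof.
move=> He; have Hom1 : 0 < / (1 - om) by apply: Rinv_0_lt_compat; lra.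
have Hpos : 0 < (1 - om) * (mu / 2 * e).
  by apply: Rmult_lt_0_compat; [lra | apply: Rmult_lt_0_compat; lra].
have [N HN] := H_cv_cluster _ Hpos.
exists N => K m HK.
rewrite seg_sum_scal (seg_sum_shift (fun j => sqnorm (vsub (x (S j)) (y (S j))))).
have := HN (S K) ltac:(lia); rewrite /R_dist => /Rabs_def2 [HH _].
apply: Rle_trans (Rmult_le_compat_l _ _ _ (Rlt_le _ _ Hom1) (step_gap_seg_sum (S K) m)) _.
have -> : e = / (1 - om) * (2 / mu * ((1 - om) * (mu / 2 * e))) by field; lra.
apply: Rmult_le_compat_l; first lra.
by apply: Rmult_le_compat_l; [apply: Rlt_le; apply: Rdiv_lt_0_compat |]; lra.
Qed.

Lemma step_limsup_nonpos : limsup_nonpos (fun k => sqnorm (vsub (x (S k)) (x k))).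
Proof.
have Hom01 : 0 <= om < 1 by have := Homs O; lra.
apply: (inertial_limsup_nonpos _ (fun k => / (1 - om) * sqnorm (vsub (x (S (S k))) (y (S (S k)))))
  om (INR n * (W * W))) => // [k|k|e He].
- split; first exact: sqnorm_nonneg.
  apply: sqnorm_le_coord_bound => i; rewrite /vsub.
  have := sumI_ge_term (fun j => u j - l j) i (fun j => ltac:(have := Hlu j; lra)).
  have := iterate_inX (S k) i; have := iterate_inX k i; rewrite -/W => *.
  by apply: Rabs_le; lra.
- by have := step_sq_rec k; rewrite /Rdiv [_ * / (1 - om)]Rmult_comm.
- have [N HN] := gap_tail_sum_small e He; exists N => k Hk.
  by have := HN k 1%nat Hk; rewrite /= Rplus_0_l addn0.
Qed.

Lemma iterates_converge : converges_to x xs.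
Proof.
have Hom01 : 0 <= om < 1 by have := Homs O; lra.
set phi := fun k => sqnorm (vsub (x k) xs).
have [K0 HK0] : exists K0, forall k, (K0 <= k)%nat -> same_support (x k) xs.
  have [d [Hd Hthr]] := iterate_nonzero_ge.
  exact: support_eventually_constant x d Hd Hthr xs Hc step_limsup_nonpos.
have Hphi_lim : limsup_nonpos phi.
  apply: (inertial_fejer_limsup_nonpos phi _ _ om K0 Hom01 _ _ _ _ _ step_limsup_nonpos
    gap_tail_sum_small) => [j|j|j|j Hj|j|e N He]; rewrite ?/phi.
  - exact: sqnorm_nonneg.
  - exact: sqnorm_nonneg.
  - by have := sqnorm_vsub_le (x (S j)) (x j) xs; lra.
  - apply: cluster_sqdist_rec; last by apply: HK0; lia.
    by move=> i hi; apply/(HK0 j Hj i)/(HK0 (S j) ltac:(lia) i).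
  - by have := step_sq_rec j; rewrite /Rdiv [_ * / (1 - om)]Rmult_comm.
  - have [k [Hk Hn]] := Hc (sqrt e) ltac:(exact: sqrt_lt_R0) N.
    by exists k; split => //; have := sqnorm_lt_of_norm _ _ Hn; rewrite sqrt_sqrt; lra.
move=> e He; have [K HK] := Hphi_lim (e * e / 2) ltac:(nra).
exists K => k Hk; apply: norm_lt_of_sqnorm => //.
have := HK k Hk; have : 0 < e * e by nra.
rewrite /phi; lra.
Qed.

End ClusterPoint.

Lemma algorithm1_convergence :
  [/\ bounded_seq x,
     (forall xs, cluster_point x xs -> local_min lam f l u xs),
     (forall xs, cluster_point x xs -> Un_cv (fun k => Hfin lam f (x k)) (Hfin lam f xs)) &
     exists xs, converges_to x xs /\ local_min lam f l u xs].
Proof.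
split; [exact: inX_bounded_seq l u x iterate_inX | exact: cluster_local_min |
         exact: H_cv_cluster |].
have [xs Hc] := inX_cluster_point_exists l u x iterate_inX.
by exists xs; split; [exact: iterates_converge | exact: cluster_local_min].
Qed.

End Algorithm.

Theorem theorem2p6 (n : nat) (lam L mu om : R) (l u : vec n)
    (f : vec n -> R) (gradf : vec n -> vec n)
    (oms : nat -> R) (x y : nat -> vec n) :
  0 < lam ->
  (forall i, l i <= u i) ->
  convex f ->
  is_gradient f gradf ->
  (exists m, forall z, inX l u z -> m <= f z) ->
  0 < L ->
  (forall z w, inX l u z -> inX l u w ->
     norm (vsub (gradf z) (gradf w)) <= L * norm (vsub z w)) ->
  0 < mu ->
  (forall k, 0 <= oms k <= om) ->
  om < 1 ->
  algorithm1 lam L mu l u gradf oms x y ->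
  bounded_seq x /\
  (forall xs, cluster_point x xs -> local_min lam f l u xs) /\
  (forall xs, cluster_point x xs ->
     Un_cv (fun k => Hfin lam f (x k)) (Hfin lam f xs)) /\
  (0 < om -> (forall k, oms k = om) ->
     exists xs, converges_to x xs /\ local_min lam f l u xs).
Proof.
(* [f] is bounded below on the compact box anyway, and the whole sequence converges for any
   weights [oms k] in [[0, om]], constant or not. *)
move=> Hlam Hlu Hcvx Hg _ HL HLip Hmu Homs Hom Halg.
have [Hbd Hloc Hcv Hconv] := algorithm1_convergence lam L mu om l u f gradf oms x y
  Hlam Hlu Hcvx Hg HL HLip Hmu Homs Hom Halg.
by do 3!split => //.
Qed.
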